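(* Let $\mathcal{P}$ and $\mathcal{S}$ be patterns, let $P\in\mathbb{R}^{n\times n}(\mathcal{P})$ be a reversible stochastic matrix with stationary distribution $\boldsymbol{\pi}$, and let $\hat{\boldsymbol{\pi}}=\boldsymbol{\pi}^{1/2}$ (entrywise square root). Let \[ \mathcal{F}=\{X\in\mathbb{R}^{n\times n}(\mathcal{S}\cup\mathcal{P}) : X_{ij}=P_{ij}\text{ for }\{i,j\}\in\mathcal{P}\setminus\mathcal{S},\ X\mathbf{1}=\mathbf{1},\ D_{\boldsymbol{\pi}}X=X^\top D_{\boldsymbol{\pi}},\ X\ge 0\}. \] Then $\mathcal{F}$ is convex, and the function \[ f(X)=\operatorname{tr}\!\left(\left(I-D_{\hat{\boldsymbol{\pi}}}XD_{\hat{\boldsymbol{\pi}}}^{-1}+\hat{\boldsymbol{\pi}}\hat{\boldsymbol{\pi}}^\top\right)^{-1}\right)+\frac12\|X-P\|_F^2 \] is convex over $\mathcal{F}$.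
   Context: A stochastic matrix is a nonnegative real matrix $P$ with $P\mathbf{1}=\mathbf{1}$ ($\mathbf{1}$ the all-ones vector); $X\ge0$ means entrywise. A stationary distribution of $P$ is a probability vector $\boldsymbol{\pi}$ with $\boldsymbol{\pi}^\top P=\boldsymbol{\pi}^\top$. A stochastic matrix is reversible if it is irreducible and its (unique, positive) stationary distribution satisfies $\pi_iP_{ij}=\pi_jP_{ji}$ for all $i,j$. $D_{\mathbf{v}}$ denotes the diagonal matrix with diagonal $\mathbf{v}$; $\|\cdot\|_F$ is the Frobenius norm. A pattern is a set of unordered pairs $\{i,j\}$, $1\le i,j\le n$, containing $\{i,i\}$ for all $i$; $\mathbb{R}^{n\times n}(\mathcal{S})$ is the set of real $n\times n$ matrices $\Delta$ with $\Delta_{ij}=\Delta_{ji}=0$ whenever $\{i,j\}\notin\mathcal{S}$. *)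

From HB Require Import structures.
From mathcomp Require Import all_boot all_order all_algebra.
Set Implicit Arguments. Unset Strict Implicit. Unset Printing Implicit Defensive.
Import Order.TTheory GRing.Theory Num.Theory.
Local Open Scope ring_scope.

Section Defs.
Variables (R : rcfType) (n : nat).

(* A pattern: a set of unordered pairs {i,j} containing all {i,i};
   represented as a reflexive symmetric relation on 'I_n. *)
Definition is_pattern (S : rel 'I_n) : Prop :=
  (forall i, S i i) /\ (forall i j, S i j = S j i).

Definition pattern_union (S T : rel 'I_n) : rel 'I_n :=
  fun i j => S i j || T i j.

Definition in_pattern (S : rel 'I_n) (D : 'M[R]_n) : Prop :=
  forall i j, ~~ S i j -> D i j = 0 /\ D j i = 0.

Definition ones : 'cV[R]_n := const_mx 1.

Definition nonneg_mx (X : 'M[R]_n) : Prop := forall i j, 0 <= X i j.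

Definition stochastic (P : 'M[R]_n) : Prop :=
  nonneg_mx P /\ P *m ones = ones.

Definition prob_vector (pi : 'cV[R]_n) : Prop :=
  (forall i, 0 <= pi i 0) /\ \sum_i pi i 0 = 1.

Definition stationary_distribution (P : 'M[R]_n) (pi : 'cV[R]_n) : Prop :=
  prob_vector pi /\ pi^T *m P = pi^T.

Definition irreducible (P : 'M[R]_n) : Prop :=
  forall i j, exists k : nat, 0 < (P ^+ k) i j.

Definition reversible (P : 'M[R]_n) : Prop :=
  stochastic P /\ irreducible P /\
  forall pi, stationary_distribution P pi ->
    forall i j, pi i 0 * P i j = pi j 0 * P j i.

Definition Dv (v : 'cV[R]_n) : 'M[R]_n := diag_mx v^T.

Definition frob2 (A : 'M[R]_n) : R := \sum_i \sum_j (A i j) ^+ 2.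

Definition feasible (Pp Ss : rel 'I_n) (P : 'M[R]_n) (pi : 'cV[R]_n)
  (X : 'M[R]_n) : Prop :=
  [/\ in_pattern (pattern_union Ss Pp) X,
      (forall i j, Pp i j -> ~~ Ss i j -> X i j = P i j),
      X *m ones = ones,
      Dv pi *m X = X^T *m Dv pi &
      nonneg_mx X].

Definition sqrt_vec (pi : 'cV[R]_n) : 'cV[R]_n := map_mx Num.sqrt pi.

Definition Mmat (pi : 'cV[R]_n) (X : 'M[R]_n) : 'M[R]_n :=
  1%:M - Dv (sqrt_vec pi) *m X *m invmx (Dv (sqrt_vec pi))
       + sqrt_vec pi *m (sqrt_vec pi)^T.

Definition fobj (P : 'M[R]_n) (pi : 'cV[R]_n) (X : 'M[R]_n) : R :=
  \tr (invmx (Mmat pi X)) + 2^-1 * frob2 (X - P).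

End Defs.

(* F is cut out by linear equations and X >= 0, hence convex.  On F the map
   X |-> M(X) = I - D X D^-1 + h h^T (D = diag h, h = sqrt pi) is affine, and
   M(X) is symmetric positive semidefinite: reversibility makes D X D^-1
   symmetric, and with X >= 0 and unit row sums its quadratic form is bounded by
   |v|^2 through  sum_ij pi_i X_ij (w_i - w_j)^2 >= 0.  The trace of the inverse
   is convex on invertible psd matrices, since
   e A^-1 e^T = max_y (2 y e^T - y A y^T) is a supremum of affine functions of A.
   The Frobenius term is a convex quadratic. *)

From HB Require Import structures.
From mathcomp Require Import all_boot all_order all_algebra.
From mathcomp Require Import ring lra.
Set Implicit Arguments. Unset Strict Implicit.
Import Order.TTheory GRing.Theory Num.Theory.
Local Open Scope ring_scope.

Section QuadraticForms.
Variables (R : realFieldType) (n : nat).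
Implicit Types (A B : 'M[R]_n) (x y z : 'rV[R]_n).

Lemma linear_eq0_of_quadratic_ge0 (a b : R) :
  (forall s, 0 <= 2 * s * a + s ^+ 2 * b) -> a = 0.
Proof.
move=> hq; set c := `|b| + 1.
have c_gt0 : 0 < c by rewrite ltr_pwDr ?normr_ge0.
have := hq (- a / c).
have -> : 2 * (- a / c) * a + (- a / c) ^+ 2 * b = a ^+ 2 * (b - 2 * c) / c ^+ 2.
  by field; rewrite gt_eqF.
rewrite pmulr_lge0 ?invr_gt0 ?exprn_gt0 // => h.
have : b - 2 * c < 0 by have := ler_norm b; have := normr_ge0 b; rewrite /c; lra.
by move=> bc_lt0; apply/eqP; rewrite -sqrf_eq0 eq_le sqr_ge0 andbT; nra.
Qed.

Let trmx11 (M : 'M[R]_1) : M 0 0 = M^T 0 0. Proof. by rewrite mxE. Qed.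

Definition mxform A x y : R := (x *m A *m y^T) 0 0.

Definition psdmx A : Prop := forall x, 0 <= mxform A x x.

Lemma mxformE A x y : mxform A x y = \sum_i \sum_j x 0 i * A i j * y 0 j.
Proof.
rewrite /mxform mxE exchange_big; apply: eq_bigr => j _.
by rewrite !mxE big_distrl.
Qed.

Lemma mxform_sym A x y : A^T = A -> mxform A x y = mxform A y x.
Proof.
by move=> sA; rewrite /mxform [LHS]trmx11 !trmx_mul trmxK sA mulmxA.
Qed.

Lemma mxform_lincomb A B (t s : R) x y :
  mxform (t *: A + s *: B) x y = t * mxform A x y + s * mxform B x y.
Proof. by rewrite /mxform mulmxDr mulmxDl -!scalemxAr -!scalemxAl !mxE. Qed.

Lemma mxform_sqrD A x y (s : R) : A^T = A ->
  mxform A (x + s *: y) (x + s *: y)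
  = mxform A x x + 2 * s * mxform A x y + s ^+ 2 * mxform A y y.
Proof.
move=> sA; have := mxform_sym x y sA; rewrite /mxform => sxy; rewrite !mxE in sxy.
rewrite linearD linearZ /= !mulmxDl !mulmxDr -!scalemxAl -!scalemxAr !mxE sxy.
ring.
Qed.

Lemma psdmx_form_eq0 A z : A^T = A -> psdmx A -> mxform A z z = 0 -> z *m A = 0.
Proof.
move=> sA pA z0.
have zw0 w : mxform A z w = 0.
  apply: (linear_eq0_of_quadratic_ge0 (b := mxform A w w)) => s.
  by have := pA (z + s *: w); rewrite mxform_sqrD // z0 add0r.
apply/rowP => j; have := zw0 (delta_mx 0 j).
by rewrite /mxform trmx_delta -colE !mxE.
Qed.

Lemma psdmx_unit_form_eq0 A z : A^T = A -> A \in unitmx -> psdmx A ->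
  mxform A z z = 0 -> z = 0.
Proof.
by move=> sA uA pA z0; rewrite -(mulmxK uA z) (psdmx_form_eq0 sA pA z0) mul0mx.
Qed.

Lemma psdmx_comb_unit A B (t : R) : A^T = A -> B^T = B ->
  A \in unitmx -> B \in unitmx -> psdmx A -> psdmx B -> 0 <= t <= 1 ->
  t *: A + (1 - t) *: B \in unitmx.
Proof.
move=> sA sB uA uB pA pB /andP[t_ge0 t_le1].
rewrite unitmxE unitfE; apply/negP => /det0P[v v_neq0 vC0].
have : t * mxform A v v + (1 - t) * mxform B v v = 0.
  by rewrite -mxform_lincomb /mxform vC0 mul0mx mxE.
have := pA v; have := pB v; have [t_gt0|t_le0] := ltrP 0 t => qB qA q0.
  have : mxform A v v = 0 by nra.
  by move/(psdmx_unit_form_eq0 sA uA pA); apply/eqP.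
have t0 : t = 0 by lra.
have : mxform B v v = 0 by rewrite t0 in q0; lra.
by move/(psdmx_unit_form_eq0 sB uB pB); apply/eqP.
Qed.

Lemma mxform_invmx_ge A x y : A^T = A -> A \in unitmx -> psdmx A ->
  2 * (y *m x^T) 0 0 - mxform A y y <= mxform (invmx A) x x.
Proof.
move=> sA uA pA; set u := x *m invmx A.
have yu : mxform A y u = (y *m x^T) 0 0.
  by rewrite /mxform /u trmx_mul trmx_inv sA -mulmxA (mulmxA A) mulmxV // mul1mx.
have uu : mxform A u u = mxform (invmx A) x x.
  by rewrite /mxform /u mulmxKV // trmx_mul trmx_inv sA mulmxA.
have := pA (y + (-1) *: u); rewrite mxform_sqrD // yu uu; lra.
Qed.

Lemma mxtrace_form A : \tr A = \sum_i mxform A (delta_mx 0 i) (delta_mx 0 i).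
Proof.
by apply: eq_bigr => i _; rewrite /mxform trmx_delta -rowE -colE !mxE.
Qed.

Lemma mxtrace_invmx_convex A B (t : R) : A^T = A -> B^T = B ->
  A \in unitmx -> B \in unitmx -> psdmx A -> psdmx B -> 0 <= t <= 1 ->
  \tr (invmx (t *: A + (1 - t) *: B))
  <= t * \tr (invmx A) + (1 - t) * \tr (invmx B).
Proof.
move=> sA sB uA uB pA pB t01.
have uC := psdmx_comb_unit sA sB uA uB pA pB t01.
move: t01 => /andP[t_ge0 t_le1]; set C := t *: A + (1 - t) *: B.
rewrite !mxtrace_form !mulr_sumr -big_split /=; apply: ler_sum => i _.
set x := delta_mx 0 i : 'rV[R]_n; set y := x *m invmx C.
have Cx : mxform (invmx C) x x = (y *m x^T) 0 0 by [].
have Cy : mxform C y y = (y *m x^T) 0 0.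
  by rewrite /mxform /y mulmxKV // [LHS]trmx11 trmx_mul trmxK.
have := mxform_lincomb A B t (1 - t) y y; rewrite -/C Cy.
have := mxform_invmx_ge x y sA uA pA; have := mxform_invmx_ge x y sB uB pB.
rewrite Cx; nra.
Qed.

Lemma sum_sym_nonneg_le (a : 'I_n -> 'I_n -> R) (w : 'I_n -> R) :
  (forall i j, a i j = a j i) -> (forall i j, 0 <= a i j) ->
  \sum_i \sum_j a i j * w i * w j <= \sum_i \sum_j a i j * w i ^+ 2.
Proof.
move=> a_sym a_ge0.
have swap : \sum_i \sum_j a i j * w j ^+ 2 = \sum_i \sum_j a i j * w i ^+ 2.
  by rewrite exchange_big; apply: eq_bigr => i _; apply: eq_bigr => j _; rewrite a_sym.
have : 0 <= \sum_i \sum_j a i j * (w i - w j) ^+ 2.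
  by do 2![apply: sumr_ge0 => ? _]; exact: mulr_ge0 (a_ge0 _ _) (sqr_ge0 _).
have -> : \sum_i \sum_j a i j * (w i - w j) ^+ 2 =
   \sum_i \sum_j a i j * w i ^+ 2 - 2 * \sum_i \sum_j a i j * w i * w j
   + \sum_i \sum_j a i j * w j ^+ 2.
  rewrite mulr_sumr -sumrB -big_split; apply: eq_bigr => i _ /=.
  rewrite mulr_sumr -sumrB -big_split; apply: eq_bigr => j _ /=; ring.
rewrite swap; lra.
Qed.

End QuadraticForms.

Section DiagonalMatrices.
Variables (F : fieldType) (n : nat).

Lemma diag_mx_mulV (d : 'rV[F]_n) : (forall i, d 0 i != 0) ->
  diag_mx d *m diag_mx (map_mx GRing.inv d) = 1%:M.
Proof.
move=> d_neq0; apply/matrixP => i j; rewrite mul_diag_mx !mxE.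
by case: eqVneq => [->|_]; rewrite ?mulr1n ?divff // mulr0n mulr0.
Qed.

Lemma diag_mx_unit (d : 'rV[F]_n) : (forall i, d 0 i != 0) -> diag_mx d \in unitmx.
Proof. by move/diag_mx_mulV/mulmx1_unit => []. Qed.

Lemma invmx_diag (d : 'rV[F]_n) : (forall i, d 0 i != 0) ->
  invmx (diag_mx d) = diag_mx (map_mx GRing.inv d).
Proof.
move=> d_neq0; have uD := diag_mx_unit d_neq0.
by rewrite -[RHS]mul1mx -(mulVmx uD) -mulmxA diag_mx_mulV // mulmx1.
Qed.

End DiagonalMatrices.

Section ReversibleChains.
Variables (R : rcfType) (n : nat).
Implicit Types (P X Y : 'M[R]_n) (pi : 'cV[R]_n).

Lemma nonneg_mxX P k : nonneg_mx P -> nonneg_mx (P ^+ k).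
Proof.
move=> P_ge0; elim: k => [|k IH] i j; first by rewrite expr0 mxE ler0n.
by rewrite exprS -mulmxE mxE; apply: sumr_ge0 => l _; exact: mulr_ge0.
Qed.

Lemma stationary_mxX P pi k : pi^T *m P = pi^T -> pi^T *m P ^+ k = pi^T.
Proof.
move=> st; elim: k => [|k IH]; first by rewrite expr0 mulmx1.
by rewrite exprS -mulmxE mulmxA st.
Qed.

Lemma stationary_flow_le P pi k i j : nonneg_mx P -> stationary_distribution P pi ->
  pi j 0 * (P ^+ k) j i <= pi i 0.
Proof.
move=> P_ge0 [[pi_ge0 _] st].
have Pk_ge0 := nonneg_mxX k P_ge0.
have -> : pi i 0 = (pi^T *m P ^+ k) 0 i by rewrite stationary_mxX // mxE.
rewrite mxE (bigD1 j) //= mxE lerDl.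
by apply: sumr_ge0 => l _; rewrite mxE mulr_ge0.
Qed.

Lemma stationary_gt0 P pi : stochastic P -> irreducible P ->
  stationary_distribution P pi -> forall i, 0 < pi i 0.
Proof.
move=> [P_ge0 _] P_irr pi_st i; have [[pi_ge0 pi_sum] _] := pi_st.
rewrite lt_def pi_ge0 andbT; apply/eqP => pi_i0.
suff : \sum_j pi j 0 = 0 by rewrite pi_sum; apply/eqP; rewrite oner_eq0.
apply: big1 => j _; have [k Pk_gt0] := P_irr j i.
have := stationary_flow_le k i j P_ge0 pi_st; rewrite pi_i0.
have := pi_ge0 j; nra.
Qed.

Lemma row_sum_eq1 X i : X *m ones R n = ones R n -> \sum_j X i j = 1.
Proof.
move/(congr1 (fun M : 'cV[R]_n => M i 0)); rewrite !mxE => <-.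
by apply: eq_bigr => j _; rewrite mxE mulr1.
Qed.

Lemma detailed_balance pi X i j : Dv pi *m X = X^T *m Dv pi ->
  pi i 0 * X i j = pi j 0 * X j i.
Proof.
move/(congr1 (fun M : 'M[R]_n => M i j)).
by rewrite /Dv mul_diag_mx mul_mx_diag !mxE => ->; rewrite mulrC.
Qed.

Lemma Mmat_lincomb pi X Y (t : R) :
  Mmat pi (t *: X + (1 - t) *: Y) = t *: Mmat pi X + (1 - t) *: Mmat pi Y.
Proof.
rewrite /Mmat mulmxDr mulmxDl -!scalemxAr -!scalemxAl.
move: (_ *m X *m _) (_ *m Y *m _) (_ *m _^T) => A B C.
by apply/matrixP => i j; rewrite !mxE; ring.
Qed.

Variable pi : 'cV[R]_n.
Hypothesis pi_gt0 : forall i, 0 < pi i 0.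

Local Notation h i := (Num.sqrt (pi i 0)).
Local Notation D := (Dv (sqrt_vec pi)).

Let h_neq0 i : h i != 0. Proof. by rewrite gt_eqF ?sqrtr_gt0. Qed.

Let D_neq0 i : (sqrt_vec pi)^T 0 i != 0. Proof. by rewrite !mxE. Qed.

Lemma Dv_sqrt_unit : D \in unitmx.
Proof. exact: diag_mx_unit. Qed.

Lemma Dv_sqrt_mul : D *m D = Dv pi.
Proof.
apply/matrixP => i j; rewrite /Dv mul_diag_mx !mxE mulrnAr -expr2.
by rewrite sqr_sqrtr ?ltW.
Qed.

Lemma Mmat_entry X i j :
  Mmat pi X i j = (i == j)%:R - h i * X i j / h j + h i * h j.
Proof.
by rewrite /Mmat invmx_diag // /Dv mul_diag_mx mul_mx_diag !mxE big_ord1 !mxE.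
Qed.

Lemma Mmat_sym X : Dv pi *m X = X^T *m Dv pi -> (Mmat pi X)^T = Mmat pi X.
Proof.
move=> X_rev; have uD := Dv_sqrt_unit.
have DT : D^T = D by exact: tr_diag_mx.
have conj_sym : (D *m X *m invmx D)^T = D *m X *m invmx D.
  rewrite !trmx_mul trmx_inv DT -[D *m X](mulKmx uD) (mulmxA D D) Dv_sqrt_mul X_rev.
  by rewrite -Dv_sqrt_mul !mulmxA mulmxK.
by rewrite /Mmat !linearD linearN /= trmx1 conj_sym trmx_mul trmxK.
Qed.

Lemma mxform_Mmat X v : mxform (Mmat pi X) v v = \sum_i v 0 i ^+ 2
  - \sum_i \sum_j h i ^+ 2 * X i j * (v 0 i / h i) * (v 0 j / h j)
  + (\sum_i v 0 i * h i) ^+ 2.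
Proof.
have -> : \sum_i v 0 i ^+ 2 = \sum_i \sum_j v 0 i * (i == j)%:R * v 0 j.
  apply: eq_bigr => i _; rewrite (bigD1 i) //= eqxx mulr1 expr2 big1 ?addr0 // => j ji.
  by rewrite eq_sym (negbTE ji) mulr0 mul0r.
have -> : (\sum_i v 0 i * h i) ^+ 2 = \sum_i \sum_j v 0 i * h i * (v 0 j * h j).
  by rewrite expr2 big_distrl; apply: eq_bigr => i _; rewrite big_distrr.
rewrite mxformE -sumrB -big_split; apply: eq_bigr => i _ /=.
rewrite -sumrB -big_split; apply: eq_bigr => j _ /=; rewrite Mmat_entry.
by field; rewrite !h_neq0.
Qed.

Lemma Mmat_psd X : Dv pi *m X = X^T *m Dv pi -> X *m ones R n = ones R n ->
  nonneg_mx X -> psdmx (Mmat pi X).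
Proof.
move=> X_rev X_row X_ge0 v; rewrite mxform_Mmat.
have h_sqr i : h i ^+ 2 = pi i 0 by rewrite sqr_sqrtr ?ltW.
have diag_part : \sum_i \sum_j h i ^+ 2 * X i j * (v 0 i / h i) ^+ 2 = \sum_i v 0 i ^+ 2.
  apply: eq_bigr => i _; rewrite -[RHS]mul1r -(row_sum_eq1 i X_row) mulr_suml.
  by apply: eq_bigr => j _; field; rewrite h_neq0.
have := sqr_ge0 (\sum_i v 0 i * h i).
have : \sum_i \sum_j h i ^+ 2 * X i j * (v 0 i / h i) * (v 0 j / h j)
    <= \sum_i v 0 i ^+ 2.
  rewrite -diag_part; apply: sum_sym_nonneg_le => i j.
    by rewrite !h_sqr detailed_balance.
  by rewrite mulr_ge0 ?sqr_ge0.
lra.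
Qed.
End ReversibleChains.

Lemma frob2_convex (R : rcfType) (n : nat) (P X Y : 'M[R]_n) (t : R) :
  0 <= t <= 1 ->
  frob2 (t *: X + (1 - t) *: Y - P) <= t * frob2 (X - P) + (1 - t) * frob2 (Y - P).
Proof.
move=> /andP[t_ge0 t_le1].
rewrite /frob2 !mulr_sumr -big_split; apply: ler_sum => i _ /=.
rewrite !mulr_sumr -big_split; apply: ler_sum => j _ /=.
rewrite !mxE; move: (X i j) (Y i j) (P i j) => x y p.
have gap : t * (x - p) ^+ 2 + (1 - t) * (y - p) ^+ 2 - (t * x + (1 - t) * y - p) ^+ 2
  = t * (1 - t) * (x - y) ^+ 2 by ring.
have : 0 <= t * (1 - t) * (x - y) ^+ 2 by rewrite mulr_ge0 ?sqr_ge0 ?mulr_ge0 ?subr_ge0.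
rewrite -gap; lra.
Qed.

Lemma feasible_convex (R : rcfType) (n : nat) (Pp Ss : rel 'I_n) (P : 'M[R]_n)
    (pi : 'cV[R]_n) (X Y : 'M[R]_n) (t : R) :
  feasible Pp Ss P pi X -> feasible Pp Ss P pi Y -> 0 <= t <= 1 ->
  feasible Pp Ss P pi (t *: X + (1 - t) *: Y).
Proof.
move=> [X_pat X_fix X_row X_rev X_ge0] [Y_pat Y_fix Y_row Y_rev Y_ge0] /andP[t_ge0 t_le1].
split.
- move=> i j ij; rewrite !mxE.
  by have [-> ->] := X_pat i j ij; have [-> ->] := Y_pat i j ij; rewrite !mulr0 addr0.
- by move=> i j Pij Sij; rewrite !mxE X_fix // Y_fix //; ring.
- by rewrite mulmxDl -!scalemxAl X_row Y_row -scalerDl addrC subrK scale1r.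
- by rewrite !linearD !linearZ /= X_rev Y_rev mulmxDl -!scalemxAl.
- by move=> i j; rewrite !mxE addr_ge0 ?mulr_ge0 ?subr_ge0.
Qed.

Unset Implicit Arguments.

Theorem proposition2p5 (R : rcfType) (n : nat) (Pp Ss : rel 'I_n)
  (P : 'M[R]_n) (pi : 'cV[R]_n) :
  is_pattern Pp -> is_pattern Ss ->
  in_pattern Pp P -> reversible P -> stationary_distribution P pi ->
  (* F is convex *)
  (forall (X Y : 'M[R]_n) (t : R),
     feasible Pp Ss P pi X -> feasible Pp Ss P pi Y -> 0 <= t <= 1 ->
     feasible Pp Ss P pi (t *: X + (1 - t) *: Y)) /\
  (* f is convex over F (f = +oo where the matrix is singular) *)
  (forall (X Y : 'M[R]_n) (t : R),
     feasible Pp Ss P pi X -> feasible Pp Ss P pi Y -> 0 <= t <= 1 ->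
     Mmat pi X \in unitmx -> Mmat pi Y \in unitmx ->
     Mmat pi (t *: X + (1 - t) *: Y) \in unitmx /\
     fobj P pi (t *: X + (1 - t) *: Y)
       <= t * fobj P pi X + (1 - t) * fobj P pi Y).
Proof.
move=> _ _ _ [P_sto [P_irr _]] P_st.
have pi_gt0 := stationary_gt0 P_sto P_irr P_st.
split=> [X Y t|]; first exact: feasible_convex.
move=> X Y t [_ _ X_row X_rev X_ge0] [_ _ Y_row Y_rev Y_ge0] t01 uX uY.
have [sX sY] := (Mmat_sym pi_gt0 X_rev, Mmat_sym pi_gt0 Y_rev).
have pX := Mmat_psd pi_gt0 X_rev X_row X_ge0.
have pY := Mmat_psd pi_gt0 Y_rev Y_row Y_ge0.
rewrite /fobj Mmat_lincomb; split; first exact: psdmx_comb_unit.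
have := mxtrace_invmx_convex sX sY uX uY pX pY t01.
have := frob2_convex P X Y t01.
by move: t01 => /andP[t_ge0 t_le1]; nra.
Qed.
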